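(* For every integer $k>1$, $\gamma(k) \le (2k+2)\,(\gamma(k-1)+1) - 1$.
   Context: For words $C,S$, $C$ is an \emph{s-cover} of $S$ if for every position $i$ of $S$ there exist indices $j_0<\dots<j_{|C|-1}$ with $S[j_t]=C[t]$ for all $t$ and $i\in\{j_0,\dots,j_{|C|-1}\}$. An s-cover $C$ of $S$ is \emph{non-trivial} if $|C|<|S|$; a word is \emph{s-primitive} if it has no non-trivial s-cover. $\gamma(k)$ is the maximum length of an s-primitive word over an alphabet of size $k$. *)

From mathcomp Require Import all_boot.
Set Implicit Arguments. Unset Strict Implicit. Unset Printing Implicit Defensive.

Definition occurrence (T : eqType) (C S : seq T) (j : seq nat) : Prop :=
  [/\ sorted ltn j, size j = size C, all (fun t => t < size S) j
    & forall t, t < size C -> onth S (nth 0 j t) = onth C t].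

Definition s_cover (T : eqType) (C S : seq T) : Prop :=
  forall i, i < size S -> exists j, occurrence C S j /\ i \in j.

Definition s_primitive (T : eqType) (S : seq T) : Prop :=
  ~ exists C : seq T, s_cover C S /\ size C < size S.

Definition is_gamma (k g : nat) : Prop :=
  (exists S : seq 'I_k, s_primitive S /\ size S = g) /\
  (forall S : seq 'I_k, s_primitive S -> size S <= g).

(* Let S be an s-primitive word over k letters and N := gamma(k-1) + 1.  A
   factor of an s-primitive word is s-primitive, so every factor of length N
   contains all k letters: otherwise it would be an s-primitive word of length
   N over k - 1 letters.  Let L be the letters of S in order of first
   occurrence and R the letters in order of last occurrence.  If
   |S| >= 2kN then R ++ L, of length at most 2k < |S|, is an s-cover of S:
   a position p with at least kN letters to its right is covered by the part
   of R before S[p] (embedded left of p, as R lists last occurrences),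
   followed by the rest of R and all of L, embedded letter by letter into
   consecutive windows of length N to the right of p; the other positions,
   which have at least kN letters to their left, are covered symmetrically.  Hence
   gamma(k) < 2k (gamma(k-1) + 1). *)
From mathcomp Require Import all_boot.
From mathcomp Require Import zify.
From Stdlib Require Import Classical.
Set Implicit Arguments. Unset Strict Implicit. Unset Printing Implicit Defensive.

Section Occurrences.
Variable T : eqType.

Lemma occurrence_nil (S : seq T) : occurrence [::] S [::].
Proof. by split. Qed.

Lemma occurrence_seq1 (x : T) : occurrence [:: x] [:: x] [:: 0].
Proof. by split => // -[]. Qed.

Lemma occurrence_id (S : seq T) : occurrence S S (iota 0 (size S)).
Proof.
split; rewrite ?size_iota //; first exact: iota_ltn_sorted.
  by apply/allP => x; rewrite mem_iota.
by move=> t ht; rewrite nth_iota.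
Qed.

Lemma occurrence_cat (C1 S1 C2 S2 : seq T) j1 j2 :
  occurrence C1 S1 j1 -> occurrence C2 S2 j2 ->
  occurrence (C1 ++ C2) (S1 ++ S2) (j1 ++ map (addn (size S1)) j2).
Proof.
case=> so1 sz1 a1 e1 [so2 sz2 a2 e2]; split.
- have tr : transitive ltn by move=> ???; apply: ltn_trans.
  rewrite (sorted_pairwise tr) pairwise_cat -!(sorted_pairwise tr) so1 /=.
  apply/andP; split.
    apply/allrelP => x y xj1 /mapP[z _ ->].
    by have := allP a1 x xj1; lia.
  by rewrite sorted_map; apply: sub_sorted so2 => x y /=; lia.
- by rewrite !size_cat size_map sz1 sz2.
- rewrite all_cat size_cat; apply/andP; split.
    by apply/allP => x /(allP a1); lia.
  by rewrite all_map; apply/allP => x /(allP a2) /=; lia.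
- move=> t; rewrite size_cat => ht.
  rewrite nth_cat sz1 [onth (C1 ++ C2) t]onth_cat.
  case: (ltnP t (size C1)) => htc.
    have hlt : nth 0 j1 t < size S1 by apply: (allP a1); apply: mem_nth; rewrite sz1.
    by rewrite onth_cat hlt e1.
  rewrite (nth_map 0) ?sz2; last by lia.
  rewrite onth_cat ltnNge leq_addr /= addKn e2 //; lia.
Qed.

Lemma subseq_occurrence (C S : seq T) : subseq C S -> exists j, occurrence C S j.
Proof.
elim: S C => [|y S IH] C /=.
  by move/eqP->; exists [::]; apply: occurrence_nil.
case: C => [|x C]; first by exists [::]; apply: occurrence_nil.
case: eqP => [<- /IH [j oj]|_ /IH [j oj]].
  by exists (0 :: map (addn 1) j); have := occurrence_cat (occurrence_seq1 x) oj.
by exists (map (addn 1) j); have := occurrence_cat (occurrence_nil [:: y]) oj.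
Qed.

Lemma occurrence_map (U : eqType) (f : T -> U) C S j :
  occurrence C S j -> occurrence (map f C) (map f S) j.
Proof.
case=> so sz a e; split => //; rewrite ?size_map //.
by move=> t ht; rewrite !onth_map e.
Qed.

Lemma s_cover_map (U : eqType) (f : T -> U) (C S : seq T) :
  s_cover C S -> s_cover (map f C) (map f S).
Proof.
move=> cov i; rewrite size_map => /cov [j [o ij]].
by exists j; split => //; apply: occurrence_map.
Qed.

Lemma s_cover_of_split (x0 : T) (C S : seq T) :
  (forall p, p < size S -> exists C1 C2,
     [/\ C = C1 ++ nth x0 S p :: C2, subseq C1 (take p S) & subseq C2 (drop p.+1 S)])
  -> s_cover C S.
Proof.
move=> H p hp; have [C1 [C2 [-> s1 s2]]] := H p hp.
have [j1 o1] := subseq_occurrence s1; have [j2 o2] := subseq_occurrence s2.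
have o := occurrence_cat (occurrence_cat o1 (occurrence_seq1 (nth x0 S p))) o2.
have eS : (take p S ++ [:: nth x0 S p]) ++ drop p.+1 S = S.
  by rewrite -catA /= -drop_nth // cat_take_drop.
rewrite eS -catA /= in o.
eexists; split; first exact: o.
by rewrite mem_cat mem_cat size_take hp /= addn0 mem_seq1 eqxx orbT.
Qed.

Lemma s_primitive_nil : s_primitive ([::] : seq T).
Proof. by case=> C []. Qed.

Lemma s_primitive_seq1 (x : T) : s_primitive [:: x].
Proof.
case=> -[|y C] [cov] //= _.
by have [[|j0 j] [[_ sz _ _] ij]] := cov 0 isT.
Qed.

(* An s-cover C of F extends to the s-cover A ++ C ++ B of A ++ F ++ B. *)
Lemma s_primitive_factor (A F B : seq T) :
  s_primitive (A ++ F ++ B) -> s_primitive F.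
Proof.
move=> H [C [cov sz]]; apply: H; exists (A ++ C ++ B); split; last first.
  by rewrite !size_cat; lia.
have [j0 [o0 _]] : exists j, occurrence C F j /\ 0 \in j by apply: cov; lia.
move=> i; rewrite !size_cat => hi.
case: (ltnP i (size A)) => hA.
  eexists; split; first exact: (occurrence_cat (occurrence_id A) (occurrence_cat o0 (occurrence_id B))).
  by rewrite mem_cat mem_iota hA.
case: (ltnP (i - size A) (size F)) => hF.
  have [j [o ij]] := cov _ hF.
  eexists; split; first exact: (occurrence_cat (occurrence_id A) (occurrence_cat o (occurrence_id B))).
  rewrite mem_cat; apply/orP; right; apply/mapP; exists (i - size A); last by lia.
  by rewrite mem_cat ij.
eexists; split; first exact: (occurrence_cat (occurrence_id A) (occurrence_cat o0 (occurrence_id B))).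
rewrite mem_cat; apply/orP; right; apply/mapP; exists (i - size A); last by lia.
rewrite mem_cat; apply/orP; right; apply/mapP; exists (i - size A - size F); last by lia.
by rewrite mem_iota; lia.
Qed.

End Occurrences.

Section FirstAndLastOccurrences.
Variable T : eqType.

Definition undupr (S : seq T) := rev (undup (rev S)).

Lemma size_undupr (S : seq T) : size (undupr S) = size (undup S).
Proof.
rewrite size_rev; apply: perm_size; apply: uniq_perm; rewrite ?undup_uniq //.
by move=> x; rewrite !mem_undup mem_rev.
Qed.

Lemma mem_undupr (S : seq T) : undupr S =i S.
Proof. by move=> x; rewrite mem_rev mem_undup mem_rev. Qed.

Lemma undup_nth_split (x0 : T) (S : seq T) p : p < size S ->
  exists l1 l2, undup S = l1 ++ nth x0 S p :: l2 /\ subseq l2 (drop p.+1 S).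
Proof.
elim: S p => [|x S IH] p //= hp.
case: p hp => [_|p hp] /=.
  case: ifP => xS.
    have [|l1 [l2 [e s]]] := IH (index x S); first by rewrite index_mem.
    rewrite nth_index // in e.
    by exists l1, l2; split => //; rewrite drop0; apply: subseq_trans s (drop_subseq _ _).
  by exists [::], (undup S); rewrite drop0 undup_subseq.
have [l1 [l2 [e s]]] := IH _ hp.
case: ifP => xS; first by exists l1, l2.
by exists (x :: l1), l2; rewrite e.
Qed.

Lemma undupr_nth_split (x0 : T) (S : seq T) p : p < size S ->
  exists l1 l2, undupr S = l1 ++ nth x0 S p :: l2 /\ subseq l1 (take p S).
Proof.
move=> hp.
have hp' : size S - p.+1 < size (rev S) by rewrite size_rev; lia.
have [l1 [l2 [e s]]] := undup_nth_split x0 hp'.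
have E : size S - (size S - p.+1).+1 = p by lia.
rewrite nth_rev ?E // in e; last by lia.
exists (rev l2), (rev l1); rewrite /undupr e rev_cat rev_cons cat_rcons; split => //.
by rewrite drop_rev ?size_rev E in s; rewrite -subseq_rev revK.
Qed.

Lemma subseq_undup_drop m (S : seq T) :
  {subset S <= drop m S} -> subseq (undup S) (drop m S).
Proof.
move=> sub; suff -> : undup S = undup (drop m S) by apply: undup_subseq.
elim: S m sub => [|x S IH] [|m] //= sub.
have xS : x \in S by apply: (mem_subseq (drop_subseq S m)); apply: sub; apply: mem_head.
by rewrite xS; apply: IH => y yS; apply: sub; apply: mem_behead.
Qed.

Lemma subseq_undupr_take m (S : seq T) : m <= size S ->
  {subset S <= take m S} -> subseq (undupr S) (take m S).
Proof.
move=> hm sub.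
have e : drop (size S - m) (rev S) = rev (take m S).
  by rewrite drop_rev; congr (rev (take _ _)); lia.
have : subseq (undup (rev S)) (drop (size S - m) (rev S)).
  by apply: subseq_undup_drop => x; rewrite e !mem_rev; apply: sub.
by rewrite e /undupr -subseq_rev revK.
Qed.

(* Greedy embedding: each letter of w is found in the next window of length N. *)
Lemma subseq_windows N (w U : seq T) :
  (forall i, i + N <= size U -> {subset w <= take N (drop i U)}) ->
  size w * N <= size U -> subseq w U.
Proof.
elim: w U => [|a w IH] U windowsU hs; first exact: sub0seq.
rewrite -(cat_take_drop N U) -cat1s; apply: cat_subseq.
  rewrite sub1seq -[U]drop0; apply: windowsU (mem_head _ _); move: hs => /=; lia.
apply: IH; last by rewrite size_drop; move: hs => /=; lia.
move=> i hi y yw; rewrite drop_drop; apply: (windowsU (i + N)); last by rewrite inE yw orbT.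
by rewrite size_drop in hi; lia.
Qed.

End FirstAndLastOccurrences.

Lemma take_drop_take (T : Type) i m N (X : seq T) : i + N <= m ->
  take N (drop i (take m X)) = take N (drop i X).
Proof.
move=> h; rewrite -{1}(subnK (leq_trans (leq_addr N i) h)) -take_drop.
by rewrite take_takel //; lia.
Qed.

Section WindowCover.
Variables (T : eqType) (N : nat) (S : seq T).
Hypothesis windowsS : forall i, i + N <= size S -> {subset S <= take N (drop i S)}.

Lemma subseq_factor_windows (w : seq T) q L :
  {subset w <= S} -> q + L <= size S -> size w * N <= L ->
  subseq w (take L (drop q S)).
Proof.
move=> wS hL hw; have sz : size (take L (drop q S)) = L.
  by rewrite size_takel // size_drop; lia.
apply: (subseq_windows (N := N)); rewrite sz // => i hi x /wS xS.
rewrite take_drop_take // drop_drop; apply: windowsS xS; lia.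
Qed.

Hypothesis long_S : 2 * size (undup S) * N <= size S.

Lemma s_cover_undupr_undup : s_cover (undupr S ++ undup S) S.
Proof.
have [-> // | [x0 [s _]]] : S = [::] \/ exists x0 s, S = x0 :: s.
  by case: S => [|x0 s]; [left | right; exists x0, s].
apply: (@s_cover_of_split _ x0 (undupr S ++ undup S) S) => p hp.
have [early | late] := ltnP (p + size (undup S) * N) (size S).
- have [f1 [f2 [e s1]]] := undupr_nth_split x0 hp.
  exists f1, (f2 ++ undup S); rewrite e -catA; split => //.
  have f2S : {subset f2 <= S} by move=> x xf2; rewrite -mem_undupr e mem_cat inE xf2 !orbT.
  have sz_f2 : size f2 < size (undup S) by rewrite -size_undupr e size_cat /=; lia.
  rewrite -(cat_take_drop (size S - N - p.+1) (drop p.+1 S)) drop_drop.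
  apply: cat_subseq; first by apply: subseq_factor_windows => //; nia.
  have -> : size S - N - p.+1 + p.+1 = size S - N by nia.
  apply: subseq_undup_drop => x /windowsS xw.
  by apply: (@mem_take N); apply: xw; nia.
- have [l1 [l2 [e s2]]] := undup_nth_split x0 hp.
  exists (undupr S ++ l1), l2; rewrite e catA; split => //.
  have l1S : {subset l1 <= S} by move=> x xl1; rewrite -mem_undup e mem_cat xl1.
  have sz_l1 : size l1 < size (undup S) by rewrite e size_cat /=; lia.
  have N_le_p : N <= p by nia.
  rewrite -(cat_take_drop N (take p S)) take_takel // -(subnK N_le_p) -take_drop.
  apply: cat_subseq.
    apply: subseq_undupr_take => [|x xS]; first by nia.
    by rewrite -[S in take _ S]drop0; apply: windowsS xS; nia.
  by apply: subseq_factor_windows => //; nia.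
Qed.

End WindowCover.

Lemma uniq_size_leq_ord k (s : seq 'I_k) : uniq s -> size s <= k.
Proof.
by move/card_uniqP <-; rewrite -[X in _ <= X]card_ord max_card.
Qed.

Section GammaBound.
Variables (k g' : nat).
Hypothesis gamma_bound : forall S : seq 'I_k.-1, s_primitive S -> size S <= g'.

(* Via [lift x], a word over 'I_k avoiding x is a word over 'I_k.-1. *)
Lemma s_primitive_avoid (x : 'I_k) (S : seq 'I_k) :
  x \notin S -> s_primitive S -> size S <= g'.
Proof.
move=> xS pS.
have eS : S = map (lift x) (pmap (unlift x) S).
  elim: S xS {pS} => //= y S IH; rewrite in_cons negb_or => /andP[xy xS].
  case: unliftP => [z ->|eq]; last by rewrite eq eqxx in xy.
  by rewrite /= -IH.
rewrite eS size_map; apply: gamma_bound => -[C [cov sz]].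
apply: pS; exists (map (lift x) C); split.
  by rewrite eS; apply: s_cover_map.
by rewrite size_map {1}eS size_map.
Qed.

Lemma s_primitive_windows (S : seq 'I_k) : s_primitive S ->
  forall i, i + g'.+1 <= size S -> forall x : 'I_k, x \in take g'.+1 (drop i S).
Proof.
move=> pS i hi x; apply/negPn/negP => /s_primitive_avoid avoid.
have : size (take g'.+1 (drop i S)) <= g'.
  apply: avoid; apply: (s_primitive_factor (A := take i S) (B := drop g'.+1 (drop i S))).
  by rewrite !cat_take_drop.
by rewrite size_takel ?size_drop ?ltnn //; lia.
Qed.

Lemma s_primitive_size_lt (S : seq 'I_k) : 0 < k -> 0 < g' -> s_primitive S ->
  size S < 2 * k * g'.+1.
Proof.
move=> k_gt0 g'_gt0 pS; rewrite ltnNge; apply/negP => long_S.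
have sz_undup : size (undup S) <= k by apply: uniq_size_leq_ord; apply: undup_uniq.
have windowsS := s_primitive_windows pS.
apply: pS; exists (undupr S ++ undup S); split.
  apply: (s_cover_undupr_undup (N := g'.+1)) => //; last first.
    by apply: leq_trans long_S; rewrite -!mulnA leq_mul2l leq_mul2r sz_undup orbT.
  by move=> i hi x _; apply: windowsS.
have -> : size (undupr S ++ undup S) = 2 * size (undup S).
  by rewrite size_cat size_undupr addnn -mul2n.
apply: leq_trans long_S; rewrite -mulnA ltn_pmul2l //.
by apply: leq_ltn_trans sz_undup _; rewrite ltn_Pmulr.
Qed.

End GammaBound.

Lemma ex_max_bounded (P : nat -> Prop) B : P 0 -> (forall n, P n -> n <= B) ->
  exists g, P g /\ forall n, P n -> n <= g.
Proof.
elim: B => [|B IH] P0 hB; first by exists 0; split => // n /hB.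
have [PB | nPB] := classic (P B.+1); first by exists B.+1.
apply: IH => // n Pn; have := hB n Pn; rewrite leq_eqVlt => /orP[/eqP e|//].
by rewrite e in Pn.
Qed.

Theorem mainTheorem6 (k : nat) : 1 < k ->
  forall g' : nat, is_gamma k.-1 g' ->
  exists g : nat, is_gamma k g /\ g <= (2 * k + 2) * (g' + 1) - 1.
Proof.
move=> hk g' [_ gamma_bound].
have g'_gt0 : 0 < g'.
  have x : 'I_k.-1 by exists 0; lia.
  by have := gamma_bound _ (s_primitive_seq1 (x := x)).
have size_bound (S : seq 'I_k) : s_primitive S -> size S <= 2 * k * g'.+1 - 1.
  by move=> pS; have := s_primitive_size_lt gamma_bound (ltnW hk) g'_gt0 pS; lia.
pose P n := exists S : seq 'I_k, s_primitive S /\ size S = n.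
have [n [[S [pS <-]] maxS]] : exists n, P n /\ forall m, P m -> m <= n.
  apply: (@ex_max_bounded P (2 * k * g'.+1 - 1)).
    by exists [::]; split; first exact: s_primitive_nil.
  by move=> _ [S [pS <-]]; apply: size_bound.
exists (size S); split; first by split; [exists S | move=> S' pS'; apply: maxS; exists S'].
by have := size_bound S pS; nia.
Qed.
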